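(* Let $G$ be a weighted graph as in the context. For every integer $m\geq 1$, \[\mathcal{E}_G(q_{m}^G,q_{m}^G)\leq \frac{2q_{2\lceil m/2\rceil}^G(\rho)}{m},\] where $\rho=\rho(G)$.
   Context: $G$ is a locally finite connected graph with at least two vertices, vertex set $V(G)$ and distinguished vertex $\rho=\rho(G)$; $\mu^G$ is a symmetric weight with $\mu^G_{xy}>0$ iff $\{x,y\}$ is an edge, $\mu^G_x:=\sum_y\mu^G_{xy}$, $\nu^G(A):=\sum_{x\in A}\mu^G_x$. The discrete time simple random walk $X^G$ has transition probabilities $P_G(x,y)=\mu^G_{xy}/\mu^G_x$ and law $\mathbf{P}^G_x$; $p^G_m(x,y):=\mathbf{P}^G_x(X^G_m=y)/\nu^G(\{y\})$, $q^G_m(x,y):=\frac12(p^G_m(x,y)+p^G_{m+1}(x,y))$, $q^G_m(x):=q^G_m(\rho,x)$ (so $q^G_m(\rho)=q^G_m(\rho,\rho)$). The generator is $\mathcal{L}_Gf(x)=\sum_yP_G(x,y)(f(y)-f(x))$, the inner product $(f,g)_G:=\sum_{x}f(x)g(x)\nu^G(\{x\})$, and the Dirichlet form $\mathcal{E}_G(f,g):=-(\mathcal{L}_Gf,g)_G$ on $\mathcal{F}_G:=\{f\in\mathbb{R}^{V(G)}:\mathcal{E}_G(f,f)<\infty\}$. *)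

From HB Require Import structures.
From mathcomp Require Import all_boot all_order all_algebra.
From mathcomp Require Import all_classical all_reals.
Set Implicit Arguments. Unset Strict Implicit. Unset Printing Implicit Defensive.
Import Order.TTheory GRing.Theory Num.Theory.
Local Open Scope classical_set_scope.
Local Open Scope ring_scope.

(* A weighted graph on the vertex type V is given by a weight function
   mu : V -> V -> R; {x,y} is an edge iff mu x y > 0. *)
Section WGraph.
Variables (R : realType) (V : choiceType) (mu : V -> V -> R).

Definition adj : rel V := fun x y => 0 < mu x y.

Definition is_weighted_graph : Prop :=
  (forall x y, mu x y = mu y x) /\
  (forall x y, 0 <= mu x y) /\
  (forall x, mu x x = 0) /\
  (forall x, finite_set [set y | mu x y != 0]) /\
  (forall x y, exists p : seq V, path adj x p /\ last x p = y) /\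
  (exists x y : V, x <> y).

(* mu_x = sum_y mu_xy  (also nu({x})) ; finitely supported by local finiteness *)
Definition muv (x : V) : R := \sum_(y \in [set: V]) mu x y.

Definition trans (x y : V) : R := mu x y / muv x.

Fixpoint trans_pow (m : nat) (x y : V) : R :=
  match m with
  | 0 => if x == y then 1 else 0
  | m'.+1 => \sum_(z \in [set: V]) trans x z * trans_pow m' z y
  end.

Definition hk (m : nat) (x y : V) : R := trans_pow m x y / muv y.

Definition qk (m : nat) (x y : V) : R := (hk m x y + hk m.+1 x y) / 2.

Definition gen (f : V -> R) (x : V) : R :=
  \sum_(y \in [set: V]) trans x y * (f y - f x).

Definition inner (f g : V -> R) : R :=
  \sum_(x \in [set: V]) f x * g x * muv x.

Definition dirichlet (f g : V -> R) : R := - inner (gen f) g.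

End WGraph.

From HB Require Import structures.
From mathcomp Require Import all_boot all_order all_algebra.
From mathcomp Require Import all_classical all_reals.
From mathcomp Require Import ring lra zify finmap.
Import Order.TTheory GRing.Theory Num.Theory.
Set Implicit Arguments. Unset Strict Implicit. Unset Printing Implicit Defensive.
Local Open Scope classical_set_scope.
Local Open Scope ring_scope.

(* Write p_n for p_n(rho, .).  By reversibility p_(n+1) = P p_n, and p_n vanishes
   outside the ball of radius n around rho.  Restricted to a large finite ball U,
   the walk P_U is self-adjoint for ( , ), P_U p_n = p_(n+1), and
   (p_i, p_j) = p_(i+j)(rho, rho).  Moreover I + P_U >= 0 since mu >= 0.  Hence
   Q_j := q_(2j)(rho) satisfies 2 Q_j = (p_j, (I + P_U) p_j) >= 0, its second
   difference is (f, (I + P_U) f) / 2 >= 0 for f = p_j - p_(j+2), and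
   E(q_m, q_m) = (Q_m - Q_(m+1)) / 2.  For a nonnegative convex sequence,
   (m - k + 1) (Q_m - Q_(m+1)) <= Q_k; take k = ceil(m/2). *)

Section FiniteSupportSums.
Variables (R : realType) (V : choiceType).
Implicit Types (s : seq V) (f : V -> R).

Lemma fsbigT_seq s f : (forall x, x \notin s -> f x = 0) ->
  \sum_(x \in [set: V]) f x = \sum_(x <- undup s) f x.
Proof.
move=> fs; rewrite (fsbigE (undup s)) ?undup_uniq //.
  by apply: eq_bigl => x; rewrite in_setT.
by move=> x _; rewrite mem_undup; apply: fs.
Qed.

Lemma fsbigT_seq1 y f : (forall x, x != y -> f x = 0) ->
  \sum_(x \in [set: V]) f x = f y.
Proof.
move=> fy; rewrite (@fsbigT_seq [:: y]) /= ?big_seq1 // => x.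
by rewrite inE; apply: fy.
Qed.

Lemma fsbigT_neq0 f : \sum_(x \in [set: V]) f x != 0 -> exists x, f x != 0.
Proof.
move=> nz; apply/not_existsP => /= f0; move: nz; rewrite fsbig1 ?eqxx //.
by move=> x _; apply/eqP; apply: contra_notT (f0 x) => /negbTE ->.
Qed.

Lemma ler_sum_uniq_subset s s' f : uniq s -> uniq s' -> {subset s <= s'} ->
  (forall x, 0 <= f x) -> \sum_(x <- s) f x <= \sum_(x <- s') f x.
Proof.
move=> us us' ss' f0; rewrite [X in _ <= X](bigID (mem s)) /=.
have -> : \sum_(x <- s' | x \in s) f x = \sum_(x <- s) f x.
  rewrite -big_filter; apply: perm_big; apply: uniq_perm; rewrite ?filter_uniq // => x.
  by rewrite mem_filter andb_idr //; apply: ss'.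
by rewrite lerDl sumr_ge0.
Qed.

End FiniteSupportSums.

Section Balls.
Variables (R : realType) (V : choiceType) (mu : V -> V -> R).
Hypothesis mu_fin : forall x, finite_set [set y | mu x y != 0].

Definition neighbours (x : V) : seq V := fset_set [set y | mu x y != 0].

Lemma mem_neighbours x y : (y \in neighbours x) = (mu x y != 0).
Proof.
rewrite /neighbours in_fset_set //=.
by apply/idP/idP => [/set_mem|/mem_set].
Qed.

Fixpoint ball (x : V) (k : nat) : seq V :=
  if k is k'.+1 then ball x k' ++ flatten [seq neighbours z | z <- ball x k']
  else [:: x].

Lemma ball_neighbour x k z y : z \in ball x k -> mu z y != 0 -> y \in ball x k.+1.
Proof.
move=> zb nz; rewrite /= mem_cat; apply/orP; right.
by apply/flatten_mapP; exists z => //; rewrite mem_neighbours.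
Qed.

Lemma ballS x k : {subset ball x k <= ball x k.+1}.
Proof. by move=> y yb; rewrite /= mem_cat yb. Qed.

Lemma ball_mono x k l : (k <= l)%N -> {subset ball x k <= ball x l}.
Proof.
move=> /subnK <-; elim: (l - k)%N => [|d IH] y yb //=.
exact/ballS/IH.
Qed.

Lemma ball_center x k : x \in ball x k.
Proof. by apply: (@ball_mono x 0) => //; rewrite inE. Qed.

Lemma neighbours_ball1 x y : mu x y != 0 -> y \in ball x 1.
Proof. exact/ball_neighbour/ball_center. Qed.

Lemma ballSP x k y : y \in ball x k.+1 ->
  y \in ball x k \/ exists2 z, z \in ball x k & mu z y != 0.
Proof.
rewrite /= mem_cat => /orP[yb|/flatten_mapP[z zb]]; first by left.
by rewrite mem_neighbours => ?; right; exists z.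
Qed.

Lemma ball_neighbour_sub x z k : mu x z != 0 -> {subset ball z k <= ball x k.+1}.
Proof.
move=> nz; elim: k => [|k IH] y.
  by rewrite inE => /eqP ->; apply: neighbours_ball1.
case/ballSP => [/IH/ballS // | [w /IH wb nwy]].
exact: ball_neighbour wb nwy.
Qed.

Lemma muvE x : muv mu x = \sum_(y <- neighbours x) mu x y.
Proof.
rewrite /muv (@fsbigT_seq _ _ (neighbours x)) ?undup_id ?fset_uniq // => y.
by rewrite mem_neighbours negbK => /eqP.
Qed.

End Balls.

Section RandomWalk.
Variables (R : realType) (V : choiceType) (mu : V -> V -> R).
Hypothesis mu_fin : forall x, finite_set [set y | mu x y != 0].
Hypothesis muv_gt0 : forall x, 0 < muv mu x.

Lemma muv_neq0 x : muv mu x != 0.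
Proof. exact: lt0r_neq0. Qed.

Lemma trans_muv x y : trans mu x y * muv mu x = mu x y.
Proof. by rewrite /trans divfK ?muv_neq0. Qed.

Lemma trans_neq0 x y : trans mu x y != 0 -> mu x y != 0.
Proof. by apply: contraNN => /eqP; rewrite /trans => ->; rewrite mul0r. Qed.

Lemma sum_trans x : \sum_(y \in [set: V]) trans mu x y = 1.
Proof.
rewrite (@fsbigT_seq _ _ (neighbours mu x)); last first.
  by move=> y; rewrite mem_neighbours // negbK /trans => /eqP ->; rewrite mul0r.
by rewrite undup_id ?fset_uniq // -mulr_suml -muvE // divff ?muv_neq0.
Qed.

Lemma trans_pow_supp n x y : trans_pow mu n x y != 0 -> y \in ball mu x n.
Proof.
elim: n x => [|n IH] x.
  by rewrite /=; have [->|_] := eqVneq x y; rewrite ?inE eqxx.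
move=> /fsbigT_neq0[z]; rewrite mulf_eq0 negb_or => /andP[/trans_neq0 xz /IH zy].
exact: (ball_neighbour_sub mu_fin xz zy).
Qed.

Lemma trans_powSr n x y :
  trans_pow mu n.+1 x y = \sum_(z \in [set: V]) trans_pow mu n x z * trans mu z y.
Proof.
elim: n x => [|n IH] x.
  rewrite /= (@fsbigT_seq1 _ _ y); last by move=> z /negbTE ->; rewrite mulr0.
  rewrite eqxx mulr1 (@fsbigT_seq1 _ _ x) ?eqxx ?mul1r // => z.
  by rewrite eq_sym => /negbTE ->; rewrite mul0r.
have first_step z : trans mu x z * trans_pow mu n.+1 z y != 0 -> z \in ball mu x 1.
  by rewrite mulf_eq0 negb_or => /andP[/trans_neq0 /(neighbours_ball1 mu_fin)].
change (trans_pow mu n.+2 x y) with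
  (\sum_(z \in [set: V]) trans mu x z * trans_pow mu n.+1 z y).
rewrite (@fsbigT_seq _ _ (ball mu x 1)); last first.
  by move=> z; apply: contraNeq => /first_step.
transitivity (\sum_(z <- undup (ball mu x 1)) \sum_(w <- undup (ball mu x n.+1))
    trans mu x z * (trans_pow mu n z w * trans mu w y)).
  apply: eq_bigr => z _; rewrite -mulr_sumr.
  have [->|xz] := eqVneq (trans mu x z) 0; first by rewrite !mul0r.
  congr (_ * _); rewrite IH; apply: fsbigT_seq => w; apply: contraNeq.
  rewrite mulf_eq0 negb_or => /andP[/trans_pow_supp zw _].
  exact: (ball_neighbour_sub mu_fin (trans_neq0 xz) zw).
rewrite exchange_big (@fsbigT_seq _ _ (ball mu x n.+1)); last first.
  move=> w; apply: contraNeq; rewrite mulf_eq0 negb_or => /andP[xw _].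
  exact: trans_pow_supp.
apply: eq_bigr => w _; rewrite [trans_pow _ _ _ _]/= mulr_fsuml.
rewrite (@fsbigT_seq _ _ (ball mu x 1)).
  by apply: eq_bigr => z _; rewrite mulrA.
move=> z; apply: contraNeq; rewrite -mulrA mulf_eq0 negb_or.
by case/andP=> /trans_neq0 /(neighbours_ball1 mu_fin).
Qed.

End RandomWalk.

Definition restr_walk (R : realType) (V : choiceType) (mu : V -> V -> R)
  (U : seq V) (f : V -> R) (x : V) : R := \sum_(y <- U) trans mu x y * f y.

Definition restr_inner (R : realType) (V : choiceType) (mu : V -> V -> R)
  (U : seq V) (f g : V -> R) : R := \sum_(x <- U) f x * g x * muv mu x.

Section ReversibleWalk.
Variables (R : realType) (V : choiceType) (mu : V -> V -> R).
Hypothesis mu_sym : forall x y, mu x y = mu y x.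
Hypothesis mu_ge0 : forall x y, 0 <= mu x y.
Hypothesis mu_fin : forall x, finite_set [set y | mu x y != 0].
Hypothesis muv_gt0 : forall x, 0 < muv mu x.

Lemma hk_supp n x y : hk mu n x y != 0 -> y \in ball mu x n.
Proof.
by rewrite /hk mulf_eq0 negb_or => /andP[/(trans_pow_supp mu_fin)].
Qed.

Lemma hkSr n x y :
  hk mu n.+1 x y = \sum_(z \in [set: V]) trans mu y z * hk mu n x z.
Proof.
rewrite /hk (trans_powSr mu_fin) mulr_fsuml; apply: eq_fsbigr => z _.
rewrite /trans mu_sym; field.
by rewrite !muv_neq0.
Qed.

Section Restriction.
Variable U : seq V.
Implicit Types f g h : V -> R.

Lemma restr_innerC f g : restr_inner mu U f g = restr_inner mu U g f.
Proof. by apply: eq_bigr => x _; rewrite (mulrC (f x)). Qed.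

Lemma restr_inner_walkE f g : restr_inner mu U (restr_walk mu U f) g =
  \sum_(x <- U) \sum_(y <- U) mu x y * f y * g x.
Proof.
apply: eq_bigr => x _; rewrite /restr_walk !mulr_suml; apply: eq_bigr => y _.
by rewrite -(trans_muv muv_gt0); ring.
Qed.

Lemma restr_inner_walk f g :
  restr_inner mu U (restr_walk mu U f) g = restr_inner mu U f (restr_walk mu U g).
Proof.
rewrite [RHS]restr_innerC !restr_inner_walkE [RHS]exchange_big /=.
by apply: eq_bigr => x _; apply: eq_bigr => y _; rewrite mu_sym; ring.
Qed.

Lemma restr_inner_combl a b f g h :
  restr_inner mu U (fun x => a * f x + b * g x) h =
  a * restr_inner mu U f h + b * restr_inner mu U g h.
Proof. by rewrite /restr_inner !mulr_sumr -big_split; apply: eq_bigr => x _ /=; ring. Qed.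

Lemma restr_inner_combr a b f g h :
  restr_inner mu U h (fun x => a * f x + b * g x) =
  a * restr_inner mu U h f + b * restr_inner mu U h g.
Proof. by rewrite restr_innerC restr_inner_combl !(restr_innerC h). Qed.

Lemma restr_walk_comb a b f g :
  restr_walk mu U (fun x => a * f x + b * g x) =
  (fun x => a * restr_walk mu U f x + b * restr_walk mu U g x).
Proof.
apply: funext => x; rewrite /restr_walk !mulr_sumr -big_split.
by apply: eq_bigr => y _ /=; ring.
Qed.

Hypothesis U_uniq : uniq U.

Lemma sum_mu_le_muv x : \sum_(y <- U) mu x y <= muv mu x.
Proof.
rewrite /muv (@fsbigT_seq _ _ (U ++ neighbours mu x)); last first.
  by move=> y; rewrite mem_cat mem_neighbours // negb_or negbK => /andP[_ /eqP].
apply: ler_sum_uniq_subset; rewrite ?undup_uniq // => y yU.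
by rewrite mem_undup mem_cat yU.
Qed.

(* (f, (I + P_U) f) exceeds half the sum of mu x y (f x + f y)^2 over U x U by
   the (nonnegative) mass of mu leaving U. *)
Lemma restr_inner_walk_ge0 f :
  0 <= restr_inner mu U f f + restr_inner mu U (restr_walk mu U f) f.
Proof.
set S1 := \sum_(x <- U) \sum_(y <- U) mu x y * f x * f x.
set S1' := \sum_(x <- U) \sum_(y <- U) mu x y * f y * f y.
set S2 := \sum_(x <- U) \sum_(y <- U) mu x y * f y * f x.
have S1_le : S1 <= restr_inner mu U f f.
  apply: ler_sum => x _.
  have -> : \sum_(y <- U) mu x y * f x * f x = f x ^+ 2 * \sum_(y <- U) mu x y.
    by rewrite mulr_sumr; apply: eq_bigr => y _; ring.
  by rewrite -expr2 ler_wpM2l ?sqr_ge0 ?sum_mu_le_muv.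
have S1_sym : S1 = S1'.
  rewrite /S1 /S1' exchange_big /=; apply: eq_bigr => x _.
  by apply: eq_bigr => y _; rewrite mu_sym.
have squares :
    \sum_(x <- U) \sum_(y <- U) mu x y * (f x + f y) ^+ 2 = S1 + S1' + (S2 + S2).
  rewrite /S1 /S1' /S2 -!big_split; apply: eq_bigr => x _ /=.
  by rewrite -!big_split; apply: eq_bigr => y _ /=; ring.
have : 0 <= \sum_(x <- U) \sum_(y <- U) mu x y * (f x + f y) ^+ 2.
  by do 2!apply: sumr_ge0 => ? _; rewrite mulr_ge0 ?sqr_ge0.
rewrite squares -S1_sym restr_inner_walkE -/S2; lra.
Qed.

End Restriction.

Lemma qkE n x :
  qk mu n x = (fun y => (2 : R)^-1 * hk mu n x y + (2 : R)^-1 * hk mu n.+1 x y).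
Proof. by apply: funext => y; rewrite /qk mulrDl !(mulrC (2 : R)^-1). Qed.

Section AroundRoot.
Variable rho : V.

Section Localized.
Variable K : nat.
Local Notation U := (undup (ball mu rho K)).

Lemma restr_walk_hk n : (n <= K)%N -> restr_walk mu U (hk mu n rho) = hk mu n.+1 rho.
Proof.
move=> nK; apply: funext => x; rewrite hkSr.
rewrite (@fsbigT_seq _ _ (ball mu rho K)) // => y; apply: contraNeq.
by rewrite mulf_eq0 negb_or => /andP[_ /hk_supp /(ball_mono nK)].
Qed.

Lemma restr_inner_hk0 n : restr_inner mu U (hk mu n rho) (hk mu 0 rho) = hk mu n rho rho.
Proof.
rewrite /restr_inner (bigD1_seq rho) ?undup_uniq ?mem_undup ?ball_center //=.
rewrite big1 ?addr0 => [|x xrho]; last first.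
  by rewrite /hk /= eq_sym (negbTE xrho) mul0r mulr0 mul0r.
by rewrite /hk /= eqxx mul1r divfK ?muv_neq0.
Qed.

Lemma restr_inner_hk i j : (i + j <= K)%N ->
  restr_inner mu U (hk mu i rho) (hk mu j rho) = hk mu (i + j) rho rho.
Proof.
elim: j i => [|j IH] i ijK; first by rewrite addn0 restr_inner_hk0.
rewrite -restr_walk_hk; last by lia.
rewrite -restr_inner_walk restr_walk_hk; last by lia.
by rewrite IH addSnnS //; lia.
Qed.

Lemma dirichlet_restr n f :
  (n < K)%N -> (forall x, x \notin ball mu rho n -> f x = 0) ->
  dirichlet mu f f = restr_inner mu U f f - restr_inner mu U (restr_walk mu U f) f.
Proof.
move=> nK f0; have suppK x : f x != 0 -> x \in ball mu rho K.
  by apply: contraNT => xK; apply/eqP/f0; apply: contra xK; apply: ball_mono; lia.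
rewrite /dirichlet /inner (@fsbigT_seq _ _ (ball mu rho K)); last first.
  by move=> x; apply: contraNeq; rewrite !mulf_eq0 !negb_or => /andP[/andP[_ /suppK]].
rewrite /restr_inner -sumrB -sumrN; apply: eq_bigr => x _.
have [->|fx] := eqVneq (f x) 0; first by rewrite !(mulr0, mul0r) subr0 oppr0.
have xn : x \in ball mu rho n by apply: contraNT fx => /f0 ->.
have stepK y : mu x y != 0 -> y \in ball mu rho K.
  by move=> xy; apply: ball_mono (ball_neighbour mu_fin xn xy); lia.
have -> : gen mu f x = restr_walk mu U f x - f x.
  rewrite /gen (@fsbigT_seq _ _ (ball mu rho K)); last first.
    move=> y; apply: contraNeq.
    by rewrite mulf_eq0 negb_or => /andP[/trans_neq0/stepK].
  rewrite /restr_walk; under eq_bigr do rewrite mulrBr.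
  rewrite sumrB -mulr_suml (_ : \sum_(y <- U) trans mu x y = 1) ?mul1r //.
  rewrite -(sum_trans mu_fin muv_gt0 x); apply/esym/fsbigT_seq => y.
  by apply: contraNeq => /trans_neq0/stepK.
ring.
Qed.

End Localized.

Lemma qk_double_ge0 j : 0 <= qk mu j.*2 rho rho.
Proof.
have := restr_inner_walk_ge0 (undup_uniq (ball mu rho j.*2.+1)) (hk mu j rho).
rewrite restr_walk_hk ?restr_inner_hk; try lia.
rewrite /qk addSn addnn; lra.
Qed.

Lemma qk_double_convex j :
  qk mu j.+1.*2 rho rho - qk mu j.+2.*2 rho rho <=
  qk mu j.*2 rho rho - qk mu j.+1.*2 rho rho.
Proof.
have := restr_inner_walk_ge0 (undup_uniq (ball mu rho (j.*2 + 5)))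
  (fun x => 1 * hk mu j rho x + (-1) * hk mu j.+2 rho x).
rewrite restr_walk_comb !restr_walk_hk; try lia.
rewrite !restr_inner_combl !restr_inner_combr !restr_inner_hk; try lia.
rewrite /qk !doubleS -!addnn !addSn !addnS; lra.
Qed.

Lemma dirichlet_qk m : dirichlet mu (qk mu m rho) (qk mu m rho) =
  (qk mu m.*2 rho rho - qk mu m.+1.*2 rho rho) / 2.
Proof.
have q0 x : x \notin ball mu rho m.+1 -> qk mu m rho x = 0.
  move=> xm; have hk0 n : (n <= m.+1)%N -> hk mu n rho x = 0.
    move=> nm; apply/eqP; apply: contraNT xm => /hk_supp.
    exact: ball_mono.
  by rewrite /qk !hk0 // addr0 mul0r.
rewrite (@dirichlet_restr (m.*2 + 3) m.+1) //; last by lia.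
rewrite qkE restr_walk_comb !restr_walk_hk; try lia.
rewrite !restr_inner_combl !restr_inner_combr !restr_inner_hk; try lia.
rewrite /qk !doubleS -!addnn !addSn !addnS; lra.
Qed.

End AroundRoot.
End ReversibleWalk.

Section ConvexSequences.
Variables (R : realFieldType) (Q : nat -> R).
Hypothesis Q_convex : forall j, Q j.+1 - Q j.+2 <= Q j - Q j.+1.

Lemma convex_telescope k m : (k <= m)%N ->
  (m - k).+1%:R * (Q m - Q m.+1) <= Q k - Q m.+1.
Proof.
elim: m => [|m IH]; first by rewrite leqn0 => /eqP ->; rewrite mul1r.
rewrite leq_eqVlt => /orP[/eqP -> | km]; first by rewrite subnn mul1r.
have -> : (m.+1 - k).+1%:R = (m - k).+1%:R + 1 :> R by rewrite subSn // natr1.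
have := ler_wpM2l (ler0n R (m - k).+1) (Q_convex m); have := IH km; lra.
Qed.

Lemma convex_ge0_decay k m : (forall j, 0 <= Q j) -> (k.*2 <= m.+1)%N ->
  m%:R * (Q m - Q m.+1) <= 2 * Q k.
Proof.
move=> Q_ge0; rewrite -mul2n => km.
have := @convex_telescope k m ltac:(lia).
have mk : (m%:R : R) <= 2 * (m - k).+1%:R by rewrite -natrM ler_nat; lia.
have := Q_ge0 k; have := Q_ge0 m.+1.
have [D0|D0] := leP 0 (Q m - Q m.+1); last first.
  by move=> *; have := ler0n R m; nra.
move=> *; have := ler_wpM2r D0 mk; lra.
Qed.

End ConvexSequences.

Lemma weighted_graph_muv_gt0 (R : realType) (V : choiceType) (mu : V -> V -> R) :
  is_weighted_graph mu -> forall x, 0 < muv mu x.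
Proof.
move=> [_ [mu_ge0 [_ [mu_fin [mu_conn [a [b ab]]]]]]] x.
have [y yx] : exists y, y != x.
  have [->|xa] := eqVneq x a; last by exists a; rewrite eq_sym.
  by exists b; apply/eqP => /esym/ab.
have [[|z p] [/= xp px]] := mu_conn x y; first by rewrite px eqxx in yx.
have xz : mu x z != 0 by rewrite gt_eqF //; case/andP: xp.
rewrite (muvE mu_fin) (bigD1_seq z) ?fset_uniq ?mem_neighbours //=.
by rewrite ltr_wpDr ?sumr_ge0 // lt0r xz mu_ge0.
Qed.

Theorem lemma4p2 (R : realType) (V : choiceType) (mu : V -> V -> R) (rho : V)
  (HG : is_weighted_graph mu) (m : nat) (hm : (1 <= m)%N) :
  dirichlet mu (qk mu m rho) (qk mu m rho)
    <= 2 * qk mu (2 * ((m + 1) %/ 2))%N rho rho / m%:R.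
Proof.
have muv_gt0 := weighted_graph_muv_gt0 HG.
case: HG => mu_sym [mu_ge0 [_ [mu_fin _]]].
pose Q j := qk mu j.*2 rho rho; set k := ((m + 1) %/ 2)%N.
have Q_ge0 j : 0 <= Q j by exact: qk_double_ge0.
have Q_convex j : Q j.+1 - Q j.+2 <= Q j - Q j.+1 by exact: qk_double_convex.
have := @convex_ge0_decay _ Q Q_convex k m Q_ge0 ltac:(rewrite -mul2n; lia).
rewrite mul2n dirichlet_qk // ler_pdivlMr ?ltr0n // -/(Q m) -/(Q m.+1) -/(Q k).
have := Q_ge0 k; nra.
Qed.
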